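(* For every $\epsilon>0$ there is $\nu_0(\epsilon)$ such that every numerical semigroup $S$ with minimal generators $a_1<a_2<\cdots<a_\nu$ satisfying (i) $a_2>\frac{c(S)+\mu(S)}{3}$, (ii) $\nu=\nu(S)\ge\nu_0(\epsilon)$, and (iii) $\mu(S)\le\frac{8}{25}\nu^2+\frac15\nu-\frac12-\epsilon$, satisfies Wilf's conjecture, i.e. $\nu(S)\,|L(S)|\ge c(S)$.
   Context: A numerical semigroup is a submonoid $S\subseteq\mathbb{N}$ with finite complement. $\nu(S)$ is the number of minimal generators (embedding dimension), $\mu(S)=a_1$ the smallest minimal generator (multiplicity), $c(S)$ the conductor (least integer with $c(S)+\mathbb{N}\subseteq S$), and $L(S)=\{x\in S: 0\le x<c(S)\}$. $S$ satisfies Wilf's conjecture if $\nu(S)|L(S)|\ge c(S)$. *)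

From mathcomp Require Import all_boot all_order all_algebra.
Set Implicit Arguments. Unset Strict Implicit. Unset Printing Implicit Defensive.

Definition is_numerical_semigroup (S : pred nat) : Prop :=
  S 0 /\ (forall x y, S x -> S y -> S (x + y)) /\ (exists N, forall n, N <= n -> S n).

Definition min_gen (S : pred nat) (x : nat) : Prop :=
  S x /\ 0 < x /\ ~ (exists y z, 0 < y /\ 0 < z /\ S y /\ S z /\ x = y + z).

Definition is_conductor (S : pred nat) (c : nat) : Prop :=
  (forall n, c <= n -> S n) /\ (forall c', (forall n, c' <= n -> S n) -> c <= c').

Definition card_L (S : pred nat) (c : nat) : nat := count S (iota 0 c).

(* Let m = a_1, let Ap be the Apery set of S with respect to m (the least element of S in each
   class mod m; all lie below c + m), q = ceil(c/m) and rho = q m - c.  An element a of Ap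
   accounts for the ceil((c - a)/m) elements a, a + m, ... of L(S), and distinct classes give
   distinct elements.  Condition (i) says 3 a_2 > c + m, so every nonzero element of Ap is a
   generator other than m or a sum g + h of two of them: three summands would exceed c + m.
   For such a sum the levels of g and h add up to at least q, or q - 1 when g + h is among the
   rho largest values below c + m.  Charging q to each of the m elements of Ap thus gives
     c + rho = q m <= q + q (nu - 1) + nu * sum_g ceil((c - g)/m) + rho,
   as each generator lies in at most nu unordered pairs; hence c <= nu |L(S)|. *)

From mathcomp Require Import all_boot all_order all_algebra.
From mathcomp Require Import zify.
From Stdlib Require Import Classical.
Import Order.TTheory GRing.Theory Num.Theory.
Set Implicit Arguments. Unset Strict Implicit. Unset Printing Implicit Defensive.

Lemma leq_sum_mem (I : eqType) (i : I) (r : seq I) (P : pred I) (F : I -> nat) :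
  i \in r -> P i -> F i <= \sum_(j <- r | P j) F j.
Proof. by move=> ir Pi; rewrite (big_rem i) // Pi leq_addr. Qed.

Lemma count_leq_size_sub (T : eqType) (a : pred T) (s t : seq T) :
  uniq s -> {in s, forall x, a x -> x \in t} -> count a s <= size t.
Proof.
move=> s_uniq sub_st; rewrite -size_filter uniq_leq_size ?filter_uniq // => x.
by rewrite mem_filter => /andP[ax xs]; apply: sub_st.
Qed.

Lemma sum_fibres_leq (I J : eqType) (A : seq J) (r : seq I) (key : I -> J)
    (F : I -> nat) :
  uniq A -> \sum_(a <- A) \sum_(i <- r | key i == a) F i <= \sum_(i <- r) F i.
Proof.
move=> A_uniq; under eq_bigr do rewrite big_mkcond /=.
rewrite exchange_big leq_sum // => i _; rewrite -big_mkcond big_const_seq iter_addn_0.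
have -> : count (fun a => key i == a) A = (key i \in A) :> nat.
  by rewrite -(count_uniq_mem _ A_uniq); apply: eq_count => a; rewrite eq_sym.
by case: (_ \in _); rewrite ?muln1 ?muln0.
Qed.

Lemma sum_bool_count (T : Type) (P : pred T) (s : seq T) :
  \sum_(x <- s) (P x : nat) = count P s.
Proof. by rewrite -sum1_count [RHS]big_mkcond; apply: eq_bigr => x _; case: (P x). Qed.

Lemma count_geq_leq_uniq (s : seq nat) x :
  uniq s -> count (leq x) s + count (geq x) s <= (size s).+1.
Proof.
move=> s_uniq; rewrite -count_predUI -addn1 leq_add ?count_size //.
apply: leq_trans (_ : count (pred1 x) s <= 1).
  by apply: sub_count => h /andP[xh hx]; apply/eqP/anti_leq/andP.
by rewrite (count_uniq_mem x s_uniq) leq_b1.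
Qed.

Lemma sum_ordered_pairs_leq (s : seq nat) (F : nat -> nat) : uniq s ->
  \sum_(g <- s) \sum_(h <- s | g <= h) (F g + F h) <= (size s).+1 * \sum_(g <- s) F g.
Proof.
move=> s_uniq; under eq_bigr do rewrite big_split /=.
rewrite big_split /=.
under [X in _ + X]eq_bigr do rewrite big_mkcond /=.
rewrite [X in _ + X]exchange_big /=.
under [X in _ + X]eq_bigr do rewrite -big_mkcond /=.
rewrite -big_split big_distrr /= leq_sum // => g _.
rewrite !big_const_seq !iter_addn_0 -mulnDr mulnC leq_mul2r.
by rewrite count_geq_leq_uniq ?orbT.
Qed.

(* [nlevels c m x] is the number of [j] with [x + j * m < c], and [depth c m = ceil (c / m)]. *)
Definition depth (c m : nat) := (c + m - 1) %/ m.

Definition nlevels (c m x : nat) := (c + m - 1 - x) %/ m.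

Lemma nlevels0 c m : nlevels c m 0 = depth c m.
Proof. by rewrite /nlevels subn0. Qed.

Lemma nlevels_lt c m x j : j < nlevels c m x -> x + j * m < c.
Proof.
case: (posnP m) => [->|m_gt0]; first by rewrite /nlevels divn0.
rewrite /nlevels leq_divRL // mulSn; lia.
Qed.

Lemma depth_bounds c m : 0 < m -> c <= depth c m * m < c + m.
Proof.
move=> m_gt0; have := ltn_ceil (c + m - 1) m_gt0; have := leq_divM (c + m - 1) m.
rewrite /depth mulSn; lia.
Qed.

(* With [N = c + m - 1], [(N - g) + (N - h) >= N] makes the quotients of [N - g] and [N - h] by [m]
   add up to at least [depth c m - 1]; the remainders then show that a deficit forces
   [g + h >= c + m - rho]. *)
Lemma depth_leq_nlevels_pair c m g h : 0 < m -> g + h < c + m ->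
  depth c m <= nlevels c m g + nlevels c m h + (c + m <= g + h + (depth c m * m - c)).
Proof.
move=> m_gt0 gh_lt; rewrite /depth /nlevels.
have := ltn_ceil (c + m - 1 - g) m_gt0; have := leq_divM (c + m - 1 - g) m.
have := ltn_ceil (c + m - 1 - h) m_gt0; have := leq_divM (c + m - 1 - h) m.
have := ltn_ceil (c + m - 1) m_gt0; have := leq_divM (c + m - 1) m.
set q := _ %/ m; set a := _ %/ m; set b := _ %/ m.
rewrite !mulSn -/q => qm_le qm_gt am_le am_gt bm_le bm_gt.
have [cond|cond] := leqP (c + m) (g + h + (q * m - c)); rewrite /= ?addn1 ?addn0;
  rewrite leqNgt; apply/negP; rewrite -(leq_pmul2r m_gt0) !mulSn mulnDl;
  move: (a * m) (b * m) (q * m) => A B Q in qm_le qm_gt am_le am_gt bm_le bm_gt cond *;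
  lia.
Qed.

Section AperyCounting.

Variables (c m : nat) (A G : seq nat).
Hypotheses (A_uniq : uniq A) (G_uniq : uniq G) (size_A : size A = m).
Hypotheses (A0 : 0 \in A) (G_sub : {subset G <= A}) (G0 : 0 \notin G).
Hypothesis A_lt : forall a, a \in A -> a < c + m.
Hypothesis A_decomp : forall a, a \in A -> 0 < a ->
  a \in G \/ exists2 g, g \in G & exists2 h, h \in G & a = g + h.

Local Notation q := (depth c m).
Local Notation rho := (depth c m * m - c).
Local Notation nl := (nlevels c m).

Let pairs := [seq (g, h) | g <- G, h <- [seq h <- G | g <= h]].
Let pair_levels (p : nat * nat) := nl p.1 + nl p.2.

Let m_gt0 : 0 < m.
Proof. by rewrite -size_A; case: (A) A0. Qed.

Lemma depth_leq_share a : a \in A ->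
  q <= q * (a == 0) + q * (a \in G)
       + \sum_(p <- pairs | p.1 + p.2 == a) pair_levels p + (c + m <= a + rho).
Proof.
move=> aA; case: (posnP a) => [_|a_gt0]; first by rewrite /= muln1 -!addnA leq_addr.
rewrite /= muln0 add0n.
case: (A_decomp aA a_gt0) => [aG|[g gG [h hG def_a]]].
  by rewrite aG muln1 -addnA leq_addr.
wlog le_gh : g h gG hG def_a / g <= h.
  move=> gen; have [|/ltnW] := leqP g h; first exact: gen.
  by apply: gen; rewrite // addnC.
subst a; apply: leq_trans (depth_leq_nlevels_pair m_gt0 (A_lt aA)) _.
rewrite leq_add2r (leq_trans _ (leq_addl _ _)) // (@leq_sum_mem _ (g, h)) ?eqxx //.
by apply: allpairs_f_dep; rewrite // mem_filter le_gh.
Qed.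

Lemma depth_mul_leq_shares :
  q * m <= q * count (pred1 0) A + q * count (mem G) A
           + \sum_(a <- A) \sum_(p <- pairs | p.1 + p.2 == a) pair_levels p
           + count (fun a => c + m <= a + rho) A.
Proof.
rewrite -!sum_bool_count !big_distrr -!big_split /=.
have sum_q : \sum_(a <- A) q = q * m.
  by rewrite big_const_seq count_predT iter_addn_0 size_A.
rewrite -{1}sum_q big_seq [X in _ <= X]big_seq.
by apply: leq_sum => a; exact: depth_leq_share.
Qed.

Lemma count_top_apery : count (fun a => c + m <= a + rho) A <= rho.
Proof.
rewrite -[X in _ <= X](size_iota (c + m - rho)) count_leq_size_sub // => a aA top.
by have := A_lt aA; rewrite mem_iota; lia.
Qed.

Lemma sum_pair_levels :
  \sum_(p <- pairs) pair_levels p <= (size G).+1 * \sum_(g <- G) nl g.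
Proof.
rewrite big_allpairs_dep /=; under eq_bigr do rewrite big_filter.
exact: sum_ordered_pairs_leq.
Qed.

Lemma wilf_apery_bound : c <= (size G).+1 * \sum_(a <- A) nl a.
Proof.
have /andP[c_le _] := depth_bounds c m_gt0.
have count0 : count (pred1 0) A <= 1 by rewrite count_uniq_mem ?leq_b1.
have countG : count (mem G) A <= size G by apply: count_leq_size_sub.
have sum_pairs :=
  leq_trans (sum_fibres_leq _ (fun p => p.1 + p.2) _ A_uniq) sum_pair_levels.
have count_top := count_top_apery.
have : c + rho <= q * 1 + q * size G + (size G).+1 * \sum_(g <- G) nl g + rho.
  rewrite subnKC //; apply: leq_trans depth_mul_leq_shares _.
  apply: leq_add => //; apply: leq_add => //.
  by apply: leq_add; rewrite leq_mul2l ?count0 ?countG orbT.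
rewrite leq_add2r muln1 -mulnS mulnC -mulnDr => /leq_trans; apply; apply: leq_mul => //.
have -> : q + \sum_(g <- G) nl g = \sum_(a <- 0 :: G) nl a by rewrite big_cons nlevels0.
apply: (uniq_sub_le_big leqnn (fun x y => leq_addr y x)) => //=.
- by rewrite G0.
- by move=> a; rewrite inE => /predU1P[->|/G_sub].
Qed.

End AperyCounting.

Section Apery.

Variables (S : pred nat) (m c : nat).
Hypothesis S_add : forall x y, S x -> S y -> S (x + y).
Hypotheses (S_ge_c : forall n, c <= n -> S n) (Sm : S m) (m_gt0 : 0 < m).

Definition in_apery y := S y && ((y < m) || ~~ S (y - m)).

(* The least element of [S] congruent to [r] modulo [m], which is at most [c * m + r]. *)
Definition apery r := find (fun x => S x && (x %% m == r)) (iota 0 ((c + 1) * m)).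

Definition apery_set := map apery (iota 0 m).

Lemma S_addmul x k : S x -> S (x + k * m).
Proof. by move=> Sx; elim: k => [|k IHk]; rewrite ?addn0 // mulSn addnCA S_add. Qed.

Lemma apery_spec r : r < m ->
  [/\ S (apery r), apery r %% m = r & forall x, S x -> x %% m = r -> apery r <= x].
Proof.
move=> r_lt; set P := fun x => S x && (x %% m == r).
have P_wit : P (c * m + r).
  rewrite /P S_ge_c ?modnMDl ?modn_small ?eqxx //.
  by rewrite (leq_trans (leq_pmulr c m_gt0)) ?leq_addr.
have hasP : has P (iota 0 ((c + 1) * m)).
  by apply/hasP; exists (c * m + r); rewrite // mem_iota mulnDl mul1n ltn_add2l.
have ap_lt : apery r < (c + 1) * m.
  by rewrite -(size_iota 0 ((c + 1) * m)) -has_find.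
have /andP[S_ap /eqP ap_mod] : P (apery r).
  by have := nth_find 0 hasP; rewrite nth_iota.
split=> // x Sx x_mod; rewrite leqNgt; apply/negP => lt_x.
have := before_find 0 lt_x; rewrite nth_iota ?(ltn_trans lt_x) //.
by rewrite /P Sx x_mod eqxx.
Qed.

Lemma in_apery_lt y : in_apery y -> y < c + m.
Proof.
case/andP=> _ /orP[y_lt|]; first exact: ltn_addl.
apply: contraR; rewrite -leqNgt => le_y; apply: S_ge_c.
by rewrite leq_subRL 1?addnC // (leq_trans (leq_addl c m) le_y).
Qed.

Lemma in_apery_apery r : r < m -> in_apery (apery r).
Proof.
move=> /apery_spec[S_ap ap_mod ap_min]; rewrite /in_apery S_ap /=.
case: (ltnP (apery r) m) => //= le_m; apply/negP => S_sub.
have sub_mod : (apery r - m) %% m = r by rewrite -[RHS]ap_mod -{2}(subnK le_m) modnDr.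
have := ap_min _ S_sub sub_mod.
by rewrite leqNgt ltn_subrL m_gt0 (leq_trans m_gt0 le_m).
Qed.

Lemma in_apery_mod y : in_apery y -> apery (y %% m) = y.
Proof.
case/andP=> Sy y_free; have [S_ap ap_mod ap_min] := apery_spec (ltn_pmod y m_gt0).
have le_ap := ap_min y Sy erefl.
apply/eqP; rewrite eqn_leq le_ap leqNgt; apply/negP => lt_ap.
have /dvdnP[[|k] def_k] : m %| y - apery (y %% m).
- by rewrite -eqn_mod_dvd ?ap_mod // ltnW.
- by move: lt_ap; rewrite -subn_gt0 def_k mul0n.
have def_y : y = apery (y %% m) + m + k * m.
  by rewrite -addnA -mulSn -def_k subnKC // ltnW.
have le_m_y : m <= y by rewrite def_y -addnA addnCA leq_addr.
have S_ym : S (y - m) by rewrite def_y addnAC addnK S_addmul.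
by move: y_free; rewrite S_ym orbF ltnNge le_m_y.
Qed.

Lemma in_apery0 : S 0 -> in_apery 0.
Proof. by rewrite /in_apery m_gt0 andbT. Qed.

Lemma in_apery_summand u v : S u -> S v -> in_apery (u + v) -> in_apery u.
Proof.
move=> Su Sv /andP[_ uv_free]; rewrite /in_apery Su /=.
case: (ltnP u m) => //= le_m; apply: contraL uv_free => Sum.
by rewrite negb_or -leqNgt (leq_trans le_m (leq_addr _ _)) addnC -addnBA // S_add.
Qed.

Lemma mem_apery_set y : (y \in apery_set) = in_apery y.
Proof.
apply/mapP/idP => [[r]|y_ap].
  by rewrite mem_iota => /andP[_ /in_apery_apery] ap ->.
by exists (y %% m); rewrite ?in_apery_mod // mem_iota ltn_pmod.
Qed.

Lemma size_apery_set : size apery_set = m.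
Proof. by rewrite size_map size_iota. Qed.

Lemma apery_set_uniq : uniq apery_set.
Proof.
rewrite map_inj_in_uniq ?iota_uniq // => r1 r2; rewrite !mem_iota /=.
move=> /apery_spec[_ mod1 _] /apery_spec[_ mod2 _] eq12.
by rewrite -mod1 -mod2 eq12.
Qed.

Lemma apery_set_mod_inj : {in apery_set &, injective (modn^~ m)}.
Proof.
move=> x y; rewrite !mem_apery_set => /in_apery_mod def_x /in_apery_mod def_y mod_xy.
by rewrite -def_x -def_y /= mod_xy.
Qed.

Lemma sum_nlevels_leq_count (A : seq nat) :
  uniq A -> {in A &, injective (modn^~ m)} -> {subset A <= S} ->
  \sum_(a <- A) nlevels c m a <= count S (iota 0 c).
Proof.
move=> A_uniq A_mod_inj A_S.
set L := [seq a + j * m | a <- A, j <- iota 0 (nlevels c m a)].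
have -> : \sum_(a <- A) nlevels c m a = size L.
  by rewrite size_allpairs_dep sumnE big_map; apply: eq_bigr => a _; rewrite size_iota.
rewrite -size_filter uniq_leq_size //.
  apply: allpairs_uniq_dep => // [a _|]; first exact: iota_uniq.
  move=> [a1 j1] [a2 j2] /allpairsPdep[b1 [i1 [b1A _ [-> ->]]]].
  move=> /allpairsPdep[b2 [i2 [b2A _ [-> ->]]]] /= eq_sum.
  have eq_b : b1 = b2.
    apply: A_mod_inj => //=.
    by rewrite -(modnMDl i1 b1) -(modnMDl i2 b2) !(addnC (_ * m)) eq_sum.
  by subst b2; move/eqP: eq_sum; rewrite eqn_add2l eqn_mul2r (gtn_eqF m_gt0) => /eqP ->.
move=> x /allpairsPdep[a [j [aA]]]; rewrite mem_iota /= => j_lt ->.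
by rewrite mem_filter (S_addmul _ (A_S _ aA)) mem_iota nlevels_lt.
Qed.

End Apery.

Lemma not_min_gen_split (S : pred nat) y : S y -> 0 < y -> ~ min_gen S y ->
  exists u v, [/\ 0 < u, 0 < v, S u, S v & y = u + v].
Proof.
move=> Sy y_gt0 not_mg; apply: NNPP => no_split; apply: not_mg; do 2!split=> //.
by case=> u [v [u_gt0 [v_gt0 [Su [Sv def_y]]]]]; apply: no_split; exists u, v.
Qed.

Section MinimalGenerators.

Variables (S : pred nat) (c : nat) (gens : seq nat).
Hypotheses (S0 : S 0) (S_add : forall x y, S x -> S y -> S (x + y)).
Hypothesis S_ge_c : forall n, c <= n -> S n.
Hypotheses (gens_sorted : sorted ltn gens) (gensP : forall x, x \in gens <-> min_gen S x).

Let mu := nth 0 gens 0.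
Let a2 := nth 0 gens 1.
Let G := behead gens.
Let rest := drop 2 gens.

Hypothesis a2_large : c + mu < 3 * a2.

Let gens_shape : gens = [:: mu, a2 & rest].
Proof.
move: a2_large; rewrite /mu /a2 /rest.
by case: (gens) => [|x [|y s]] //= _; rewrite drop0.
Qed.

Let G_shape : G = a2 :: rest.
Proof. by rewrite /G {1}gens_shape. Qed.

Let gens_path : path ltn mu G.
Proof. by have := gens_sorted; rewrite {1}gens_shape G_shape. Qed.

Let mu_min_gen : min_gen S mu.
Proof. by apply/gensP; rewrite gens_shape mem_head. Qed.

Lemma G_gt_mu g : g \in G -> mu < g.
Proof. by have /allP := order_path_min ltn_trans gens_path; apply. Qed.

Lemma G_ge_a2 g : g \in G -> a2 <= g.
Proof.
move: gens_path; rewrite G_shape /= => /andP[_ /(order_path_min ltn_trans)/allP gt_a2].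
by rewrite inE => /predU1P[-> //|/gt_a2/ltnW].
Qed.

Lemma G_uniq : uniq G.
Proof. exact: (sorted_uniq ltn_trans ltnn) (path_sorted gens_path). Qed.

Lemma G_min_gen g : g \in G -> min_gen S g.
Proof. by move=> gG; apply/gensP/mem_behead. Qed.

Lemma in_apery_G g : g \in G -> in_apery S mu g.
Proof.
move=> gG; have [Sg [g_gt0 no_split]] := G_min_gen gG; have mu_lt := G_gt_mu gG.
rewrite /in_apery Sg ltnNge ltnW //=; apply/negP => S_gmu; apply: no_split.
have [S_mu [mu_gt0 _]] := mu_min_gen.
by exists mu, (g - mu); rewrite subn_gt0 subnKC // ltnW.
Qed.

Lemma min_gen_in_apery y : min_gen S y -> in_apery S mu y -> y \in G.
Proof.
move=> /gensP; rewrite gens_shape -G_shape inE => /predU1P[->|//].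
by rewrite /in_apery ltnn subnn S0 andbF.
Qed.

Lemma in_apery_ge_a2 y : in_apery S mu y -> 0 < y -> a2 <= y.
Proof.
elim/ltn_ind: y => y IHy y_ap y_gt0; have Sy : S y by case/andP: y_ap.
have [mg|not_mg] := classic (min_gen S y); first exact/G_ge_a2/min_gen_in_apery.
have [u [v [u_gt0 v_gt0 Su Sv def_y]]] := not_min_gen_split Sy y_gt0 not_mg.
rewrite def_y in y_ap *; apply: leq_trans (leq_addr v u).
apply: IHy (in_apery_summand S_add Su Sv y_ap) u_gt0.
by rewrite def_y -{1}(addn0 u) ltn_add2l.
Qed.

(* Otherwise [u] splits further, and three nonzero Apery elements add up to at least [3 * a2]. *)
Lemma in_apery_summand_G u v : S u -> S v -> 0 < u -> 0 < v ->
  in_apery S mu (u + v) -> u + v < c + mu -> u \in G.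
Proof.
move=> Su Sv u_gt0 v_gt0 uv_ap uv_lt; have u_ap := in_apery_summand S_add Su Sv uv_ap.
have [mg|not_mg] := classic (min_gen S u); first exact: min_gen_in_apery.
have [u1 [u2 [u1_gt0 u2_gt0 Su1 Su2 def_u]]] := not_min_gen_split Su u_gt0 not_mg.
rewrite def_u in u_ap uv_ap uv_lt.
have v_ap : in_apery S mu v.
  by apply: (in_apery_summand S_add Sv (S_add Su1 Su2)); rewrite addnC.
have u1_ap := in_apery_summand S_add Su1 Su2 u_ap.
have u2_ap : in_apery S mu u2 by apply: (in_apery_summand S_add Su2 Su1); rewrite addnC.
have three_a2 : 3 * a2 <= u1 + u2 + v.
  rewrite mulSn mul2n -addnn addnA.
  by do 2?apply: leq_add; apply: in_apery_ge_a2.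
by have := leq_ltn_trans three_a2 (ltn_trans uv_lt a2_large); rewrite ltnn.
Qed.

Lemma in_apery_decomp y : in_apery S mu y -> 0 < y ->
  y \in G \/ exists2 g, g \in G & exists2 h, h \in G & y = g + h.
Proof.
move=> y_ap y_gt0; have Sy : S y by case/andP: y_ap.
have [mg|not_mg] := classic (min_gen S y); first by left; apply: min_gen_in_apery.
have [u [v [u_gt0 v_gt0 Su Sv def_y]]] := not_min_gen_split Sy y_gt0 not_mg.
have y_lt := in_apery_lt S_ge_c y_ap; rewrite def_y in y_ap y_lt.
right; exists u; first exact: in_apery_summand_G Su Sv u_gt0 v_gt0 y_ap y_lt.
exists v => //; rewrite addnC in y_ap y_lt.
exact: in_apery_summand_G Sv Su v_gt0 u_gt0 y_ap y_lt.
Qed.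

Lemma wilf_of_large_a2 : c <= size gens * card_L S c.
Proof.
have [S_mu [mu_gt0 _]] := mu_min_gen.
have G0 : 0 \notin G by apply/negP => /G_gt_mu.
rewrite {1}gens_shape -G_shape /=.
apply: leq_trans (wilf_apery_bound (A := apery_set S mu c) _ G_uniq _ _ _ G0 _ _) _.
- exact: apery_set_uniq.
- exact: size_apery_set.
- by rewrite mem_apery_set // in_apery0.
- by move=> g gG; rewrite mem_apery_set // in_apery_G.
- by move=> a; rewrite mem_apery_set //; exact: in_apery_lt.
- by move=> a; rewrite mem_apery_set //; exact: in_apery_decomp.
rewrite leq_mul2l sum_nlevels_leq_count ?orbT //.
- exact: apery_set_uniq.
- exact: apery_set_mod_inj.
- by move=> a; rewrite mem_apery_set // => /andP[].
Qed.

End MinimalGenerators.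

Lemma ltn_of_rat_third (a b d : nat) :
  (a%:R > (b%:R + d%:R) / 3 :> rat)%R -> b + d < 3 * a.
Proof. by rewrite ltr_pdivrMr // -natrD -natrM ltr_nat mulnC. Qed.

Local Open Scope ring_scope.

Theorem theorem4p5 :
  forall eps : rat, 0 < eps ->
  exists nu0 : nat,
  forall (S : pred nat) (c : nat) (gens : seq nat),
    is_numerical_semigroup S ->
    is_conductor S c ->
    sorted ltn gens ->
    (forall x, x \in gens <-> min_gen S x) ->
    let nu := size gens in
    let mu := nth 0%N gens 0 in
    let a2 := nth 0%N gens 1 in
    (a2%:R > (c%:R + mu%:R) / 3 :> rat) ->
    (nu0 <= nu)%N ->
    (mu%:R <= 8%:R / 25%:R * nu%:R ^+ 2 + nu%:R / 5%:R - 1 / 2%:R - eps :> rat) ->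
    (c <= nu * card_L S c)%N.
Proof.
move=> eps _; exists 0%N => S c gens [S0 [S_add _]] [S_ge_c _] gens_sorted gensP.
move=> nu mu a2 a2_large _ _.
exact: wilf_of_large_a2 S0 S_add S_ge_c gens_sorted gensP (ltn_of_rat_third a2_large).
Qed.
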